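(* Let $n \ge 1$ and let $X_1,\dots,X_n$ be independent Bernoulli random variables with $P(X_i=1)=p_i$, where $p_1 \le p_2 \le \cdots \le p_n$. For an integer $\theta$, let $\Pi_\theta(X_1,\dots,X_n)=1$ if $\sum_i X_i \ge \theta$ and $0$ otherwise. Consider adaptive transmission orderings: at each step a node that has not yet transmitted is chosen as a (deterministic) function of the bits broadcast so far, and it broadcasts its bit $X_i$; the process stops once the value of the function is determined by the broadcast bits. Then for every $0 \le k \le n-1$, among the orderings that minimize the expected number of broadcast bits needed to determine $\Pi_{n-k}(X_1,\dots,X_n)$, there is one in which node $k+1$ transmits first. Equivalently, defining for a set $S$ of nodes and integer $\theta$: $C(S,\theta)=0$ if $\theta\le 0$ or $\theta>|S|$, and otherwise $C(S,\theta)=\min_{i\in S}\{1+p_i\,C(S\setminus\{i\},\theta-1)+(1-p_i)\,C(S\setminus\{i\},\theta)\}$, the minimum defining $C(\{1,\dots,n\},n-k)$ is attained at $i=k+1$.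
   Context: Setting: a collocated (broadcast) network of $n$ nodes, every transmission is heard by all nodes, at most one node transmits at a time, and collisions convey no information, so the identity of the node sending the $j$-th bit depends only on the previously broadcast bits. Each node $i$ holds a single bit $X_i$, and every node must compute $\Pi_{n-k}(X_1,\dots,X_n)$ with zero error. $C(S,\theta)$ is the minimum expected number of broadcast bits needed to compute the threshold function with threshold $\theta$ of the bits of the nodes in $S$. *)

From HB Require Import structures.
From mathcomp Require Import all_boot all_order all_algebra.
Set Implicit Arguments. Unset Strict Implicit. Unset Printing Implicit Defensive.
Import Order.TTheory GRing.Theory Num.Theory.
Local Open Scope ring_scope.

(* Minimum of a list of reals (0 on the empty list; never used on an empty list
   below, since C only takes a minimum when 1 <= theta <= |S|). *)
Definition minlist (R : realFieldType) (l : seq R) : R :=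
  match l with [::] => 0 | x :: l' => foldr Num.min x l' end.

(* Nodes are 'I_n (node i+1 of the paper is the ordinal i); p i = P(X_i = 1).
   Cf fuel S theta is C(S, theta), computed by recursion on the fuel #|S|. *)
Fixpoint Cf (R : realFieldType) (n : nat) (p : 'I_n -> R)
    (fuel : nat) (S : {set 'I_n}) (theta : nat) : R :=
  match fuel with
  | 0%N => 0
  | fuel'.+1 =>
      if (theta == 0%N) || (#|S| < theta)%N then 0
      else minlist [seq 1 + p i * Cf p fuel' (S :\ i) theta.-1
                          + (1 - p i) * Cf p fuel' (S :\ i) theta | i <- enum S]
  end.

Definition C (R : realFieldType) (n : nat) (p : 'I_n -> R)
    (S : {set 'I_n}) (theta : nat) : R := Cf p #|S| S theta.

Definition Cterm (R : realFieldType) (n : nat) (p : 'I_n -> R)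
    (S : {set 'I_n}) (theta : nat) (i : 'I_n) : R :=
  1 + p i * C p (S :\ i) theta.-1 + (1 - p i) * C p (S :\ i) theta.

From HB Require Import structures.
From mathcomp Require Import all_boot all_order all_algebra.
Import Order.TTheory GRing.Theory Num.Theory.
From mathcomp Require Import ring lra zify.
Set Implicit Arguments. Unset Strict Implicit. Unset Printing Implicit Defensive.
Local Open Scope ring_scope.

(* C(S, θ) only depends on the sorted list of the p_i, i ∈ S, so we work with
   lists. The pivot strategy on a nondecreasing list of length m and threshold θ
   always queries position m - θ. Its cost is affine in each entry, and an
   exchange computation based on this shows that putting two adjacent entries
   in increasing order never increases it. Bubbling a queried entry to the pivot
   position then shows that querying any entry first and continuing with the
   pivot strategy costs at least as much; by induction on |S|, C(S, θ) is the
   cost of the pivot strategy and the minimum is attained at the pivot, which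
   for S = {1..n} and θ = n - k is node k + 1. *)

Definition rem_nth (T : Type) (j : nat) (s : seq T) := take j s ++ drop j.+1 s.

Lemma rem_nth0 (T : Type) (x : T) s : rem_nth 0 (x :: s) = s.
Proof. by rewrite /rem_nth /= drop0. Qed.

Lemma rem_nthS (T : Type) j (x : T) s : rem_nth j.+1 (x :: s) = x :: rem_nth j s.
Proof. by []. Qed.

Lemma size_rem_nth (T : Type) j (s : seq T) :
  (j < size s)%N -> size (rem_nth j s) = (size s).-1.
Proof. by move=> hj; rewrite /rem_nth size_cat size_take size_drop hj; lia. Qed.

Lemma rem_nth_cat (T : Type) j (s1 s2 : seq T) : rem_nth j (s1 ++ s2) =
  if (j < size s1)%N then rem_nth j s1 ++ s2 else s1 ++ rem_nth (j - size s1) s2.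
Proof.
rewrite /rem_nth take_cat drop_cat; case: ltnP => hj.
  case: ltnP => hj1; first by rewrite catA.
  have -> : j.+1 = size s1 by lia.
  by rewrite subnn drop0 drop_size cats0.
by case: ltnP => hj1; [lia | rewrite subSn // catA].
Qed.

Lemma mem_rem_nth (T : eqType) j (s : seq T) x : x \in rem_nth j s -> x \in s.
Proof. by rewrite mem_cat => /orP [/mem_take | /mem_drop]. Qed.

Lemma map_rem (T : eqType) (U : Type) (f : T -> U) x s :
  map f (rem x s) = rem_nth (index x s) (map f s).
Proof.
elim: s => [//|y s IH] /=; case: eqP => _ /=; first by rewrite rem_nth0.
by rewrite rem_nthS IH.
Qed.

Section PivotCost.
Variable R : realFieldType.
Implicit Types (A B D M l : seq R) (a b c x : R).

Definition probs l := all (fun x => 0 <= x <= 1) l.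

Lemma probs_cat A B : probs (A ++ B) = probs A && probs B.
Proof. exact: all_cat. Qed.

Lemma probs_rem_nth j l : probs l -> probs (rem_nth j l).
Proof. by move=> /allP hl; apply/allP => x /mem_rem_nth /hl. Qed.

Lemma probs_nth j l : probs l -> 0 <= nth 0 l j <= 1.
Proof.
move=> /allP hl; case: (ltnP j (size l)) => hj; first by rewrite hl ?mem_nth.
by rewrite nth_default // lexx ler01.
Qed.

Fixpoint pivot_costf (fuel : nat) l (th : nat) : R :=
  match fuel with
  | 0%N => 0
  | fuel'.+1 =>
      if (th == 0%N) || (size l < th)%N then 0 else
      let j := (size l - th)%N in
      1 + nth 0 l j * pivot_costf fuel' (rem_nth j l) th.-1
        + (1 - nth 0 l j) * pivot_costf fuel' (rem_nth j l) th
  end.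

Definition pivot_cost l th := pivot_costf (size l) l th.

Definition query_cost l j th :=
  1 + nth 0 l j * pivot_cost (rem_nth j l) th.-1
    + (1 - nth 0 l j) * pivot_cost (rem_nth j l) th.

Lemma pivot_costE l th : pivot_cost l th =
  if (th == 0%N) || (size l < th)%N then 0 else query_cost l (size l - th) th.
Proof.
rewrite /pivot_cost /query_cost; case: l => [|y l] /=; first by case: th.
case: ifP => // /negbT; rewrite negb_or -leqNgt => /andP [th0 thle].
by rewrite /pivot_cost !size_rem_nth //=; lia.
Qed.

Lemma pivot_cost_ge0 l th : probs l -> 0 <= pivot_cost l th.
Proof.
have [N] := ubnP (size l); elim: N l th => // N IH l th /ltnSE hN hl.
rewrite pivot_costE; case: ifP => // /negbT.
rewrite negb_or -leqNgt => /andP [th0 thle].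
set j := (size l - th)%N; have /andP [q0 q1] := probs_nth j hl.
have hs : (size (rem_nth j l) < N)%N by rewrite size_rem_nth; lia.
have c1 := IH _ th.-1 hs (probs_rem_nth j hl).
have c0 := IH _ th hs (probs_rem_nth j hl).
rewrite /query_cost -/j; have q1' : 0 <= 1 - nth 0 l j by lra.
by have := mulr_ge0 q0 c1; have := mulr_ge0 q1' c0; lra.
Qed.

Lemma pivot_cost_cat_cons A B c : pivot_cost (A ++ c :: B) (size B).+1 =
  1 + c * pivot_cost (A ++ B) (size B) + (1 - c) * pivot_cost (A ++ B) (size B).+1.
Proof.
rewrite pivot_costE size_cat /= ltnNge leq_addl /=.
rewrite /query_cost (_ : _ - _ = size A)%N; last lia.
by rewrite nth_cat rem_nth_cat ltnn subnn rem_nth0.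
Qed.

Lemma pivot_cost_affine A B x th : pivot_cost (A ++ x :: B) th =
  (1 - x) * pivot_cost (A ++ 0 :: B) th + x * pivot_cost (A ++ 1 :: B) th.
Proof.
have [N] := ubnP (size A + size B); elim: N A B th => // N IH A B th /ltnSE hN.
rewrite !(pivot_costE (A ++ _ :: B)) !size_cat /=.
case: ifP => [_|/negbT]; first ring.
rewrite negb_or -leqNgt => /andP [th0 thle].
rewrite /query_cost; set u := (_ - th)%N; rewrite !nth_cat !rem_nth_cat.
case: (ltngtP u (size A)) => hu.
- have hs : (size (rem_nth u A) + size B < N)%N by rewrite size_rem_nth; lia.
  by rewrite !(IH _ _ _ hs); ring.
- have [v ev] : exists v, (u - size A)%N = v.+1 by exists (u - size A).-1; lia.
  rewrite ev /= !rem_nthS.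
  have hs : (size A + size (rem_nth v B) < N)%N by rewrite size_rem_nth; lia.
  by rewrite !(IH _ _ _ hs); ring.
- by rewrite hu subnn /= !rem_nth0; ring.
Qed.

Lemma affine_exchange a b (f0 f1 g0 g1 : R) :
  (1 + a * ((1 - b) * f0 + b * f1) + (1 - a) * ((1 - b) * g0 + b * g1))
  - (1 + b * ((1 - a) * f0 + a * f1) + (1 - b) * ((1 - a) * g0 + a * g1))
  = (b - a) * (g1 - f0).
Proof. ring. Qed.

Lemma query_step_le (y v1 v0 w1 w0 : R) : 0 <= y <= 1 -> v1 <= w1 -> v0 <= w0 ->
  1 + y * v1 + (1 - y) * v0 <= 1 + y * w1 + (1 - y) * w0.
Proof. by move=> /andP [y0 y1] hv1 hv0; nra. Qed.

Section AdjacentSwap.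
Variable m : nat.
(* Induction hypothesis of [pivot_cost_swap], on the total length of [A ++ B]. *)
Hypothesis swap_lt : forall A B a b th, (size A + size B < m)%N ->
  probs A -> probs B -> 0 <= a -> a <= b -> b <= 1 ->
  pivot_cost (A ++ [:: a, b & B]) th <= pivot_cost (A ++ [:: b, a & B]) th.

Lemma pivot_cost_zero_le A B : (size A + size B <= m)%N -> probs A -> probs B ->
  pivot_cost (A ++ 0 :: B) (size B) <= 1 + pivot_cost (A ++ B) (size B).
Proof.
case: B => [|z B] hm hA hB /=.
  by rewrite !pivot_costE !eqxx addr0 ler01.
move: hB; rewrite /probs /= => /andP [/andP [z0 z1] hB].
have hm' : (size A + size B < m)%N by move: hm => /=; lia.
have := swap_lt (size B).+1 hm' hA hB (lexx 0) z0 z1.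
have := pivot_cost_cat_cons (rcons A z) B 0; rewrite !cat_rcons => ->.
by rewrite mul0r subr0 mul1r addr0.
Qed.

Lemma pivot_cost_one_le A B : (size A + size B <= m)%N -> probs A -> probs B ->
  pivot_cost (A ++ 1 :: B) (size B).+2 <= 1 + pivot_cost (A ++ B) (size B).+1.
Proof.
case/lastP: A => [|A y] hm hA hB.
  rewrite pivot_costE /= ltnSn.
  by have := pivot_cost_ge0 (size B).+1 hB; lra.
move: hA; rewrite /probs all_rcons => /andP [/andP [y0 y1] hA].
have hm' : (size A + size B < m)%N by move: hm; rewrite size_rcons; lia.
rewrite !cat_rcons; apply: le_trans (swap_lt (size B).+2 hm' hA hB y0 y1 (lexx 1)) _.
by rewrite (pivot_cost_cat_cons A (y :: B) 1) /= subrr mul0r addr0 mul1r.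
Qed.

Lemma pivot_cost_swap_second A B a b : (size A + size B <= m)%N ->
  probs A -> probs B -> 0 <= a -> a <= b -> b <= 1 ->
  pivot_cost (A ++ [:: a, b & B]) (size B).+1
  <= pivot_cost (A ++ [:: b, a & B]) (size B).+1.
Proof.
move=> hm hA hB a0 ab b1.
rewrite -(cat_rcons a A) -(cat_rcons b A) !pivot_cost_cat_cons !cat_rcons.
rewrite !(pivot_cost_affine A B a) !(pivot_cost_affine A B b).
rewrite -subr_ge0 affine_exchange mulr_ge0 ?subr_ge0 //.
rewrite (pivot_cost_cat_cons A B 1) mul1r subrr mul0r addr0.
exact: pivot_cost_zero_le.
Qed.

Lemma pivot_cost_swap_first A B a b : (size A + size B <= m)%N ->
  probs A -> probs B -> 0 <= a -> a <= b -> b <= 1 ->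
  pivot_cost (A ++ [:: a, b & B]) (size B).+2
  <= pivot_cost (A ++ [:: b, a & B]) (size B).+2.
Proof.
move=> hm hA hB a0 ab b1.
rewrite (pivot_cost_cat_cons A (b :: B) a) (pivot_cost_cat_cons A (a :: B) b) /=.
rewrite !(pivot_cost_affine A B a) !(pivot_cost_affine A B b).
rewrite -subr_le0 affine_exchange mulr_ge0_le0 ?subr_ge0 ?subr_le0 //.
rewrite (pivot_cost_cat_cons A B 0) mul0r addr0 subr0 mul1r.
exact: pivot_cost_one_le.
Qed.

Lemma pivot_cost_swap_step A B a b th : (size A + size B <= m)%N ->
  probs A -> probs B -> 0 <= a -> a <= b -> b <= 1 ->
  pivot_cost (A ++ [:: a, b & B]) th <= pivot_cost (A ++ [:: b, a & B]) th.
Proof.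
move=> hm hA hB a0 ab b1.
have [->|thB1] := eqVneq th (size B).+1; first exact: pivot_cost_swap_second.
have [->|thB2] := eqVneq th (size B).+2; first exact: pivot_cost_swap_first.
rewrite !(pivot_costE (A ++ _)) !size_cat /=.
case: ifP => [_|/negbT]; first exact: lexx.
rewrite negb_or -leqNgt => /andP [th0 thle].
rewrite /query_cost !nth_cat !rem_nth_cat; set u := (_ - th)%N.
case: (ltnP u (size A)) => hu.
  have hs : (size (rem_nth u A) + size B < m)%N by rewrite size_rem_nth; lia.
  by apply: query_step_le; [exact: probs_nth | apply: swap_lt..] => //;
    exact: probs_rem_nth.
have [v ev] : exists v, (u - size A)%N = v.+2 by exists (u - size A - 2)%N; lia.
rewrite ev /= !rem_nthS.
have hs : (size A + size (rem_nth v B) < m)%N by rewrite size_rem_nth; lia.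
by apply: query_step_le; [exact: probs_nth | apply: swap_lt..] => //;
  exact: probs_rem_nth.
Qed.

End AdjacentSwap.

Lemma pivot_cost_swap A B a b th : probs A -> probs B -> 0 <= a -> a <= b -> b <= 1 ->
  pivot_cost (A ++ [:: a, b & B]) th <= pivot_cost (A ++ [:: b, a & B]) th.
Proof.
have [N] := ubnP (size A + size B); elim: N A B a b th => // N IH A B a b th.
by move=> /ltnSE; apply: pivot_cost_swap_step => A' B' a' b' th' /IH; apply.
Qed.

Lemma pivot_cost_shift_right M A D x th :
  probs A -> probs M -> probs D -> 0 <= x <= 1 -> all (fun c => x <= c) M ->
  pivot_cost (A ++ x :: M ++ D) th <= pivot_cost (A ++ M ++ x :: D) th.
Proof.
elim: M A => [//|c M IH] A hA hM hD hx hxM.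
move: hM hxM; rewrite /probs /= => /andP [/andP [c0 c1] hM] /andP [xc hxM].
apply: le_trans (_ : pivot_cost (A ++ [:: c, x & M ++ D]) th <= _).
  by case/andP: hx => x0 _; apply: pivot_cost_swap => //; rewrite probs_cat; apply/andP.
rewrite -!(cat_rcons c A); apply: IH => //.
by rewrite /probs all_rcons c0 c1.
Qed.

Lemma pivot_cost_shift_left M A D x th :
  probs A -> probs M -> probs D -> 0 <= x <= 1 -> all (fun c => c <= x) M ->
  pivot_cost (A ++ M ++ x :: D) th <= pivot_cost (A ++ x :: M ++ D) th.
Proof.
elim: M A => [//|c M IH] A hA hM hD hx hxM.
move: hM hxM; rewrite /probs /= => /andP [/andP [c0 c1] hM] /andP [cx hxM].
apply: (@le_trans _ _ (pivot_cost (A ++ [:: c, x & M ++ D]) th)); last first.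
  by case/andP: hx => _ x1; apply: pivot_cost_swap => //; rewrite probs_cat; apply/andP.
rewrite -!(cat_rcons c A); apply: IH => //.
by rewrite /probs all_rcons c0 c1.
Qed.

Lemma pivot_cost_le_cat_cons A B x th :
  pairwise <=%R (A ++ x :: B) -> probs (A ++ x :: B) ->
  (0 < th)%N -> (th <= size A + (size B).+1)%N ->
  pivot_cost (A ++ x :: B) th
  <= 1 + x * pivot_cost (A ++ B) th.-1 + (1 - x) * pivot_cost (A ++ B) th.
Proof.
move=> hsort; rewrite probs_cat /probs /= -/(probs A) -/(probs B).
move=> /and3P [hA hx hB] th0 thle.
move: hsort; rewrite pairwise_cat /= => /and3P [hAxB _ /andP [hxB _]].
set s := (size A + (size B).+1 - th)%N.
case: (leqP (size A) s) => hs.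
  set j := (s - size A)%N.
  move: hB hxB; rewrite -[B](cat_take_drop j) probs_cat all_cat.
  move=> /andP [hT hD] /andP [hxT _].
  have hj : size (drop j B) = th.-1 by rewrite size_drop; lia.
  have := pivot_cost_cat_cons (A ++ take j B) (drop j B) x.
  rewrite hj (prednK th0) -!catA.
  by move=> <-; exact: pivot_cost_shift_right.
have hAx : all (fun c => c <= x) A.
  by apply/allP => c /(allP hAxB) /andP [].
move: hA hAx; rewrite -[A](cat_take_drop s) probs_cat all_cat.
move=> /andP [hT hD] /andP [_ hDx].
have hsize : size (drop s A ++ B) = th.-1 by rewrite size_cat size_drop; lia.
have := pivot_cost_cat_cons (take s A) (drop s A ++ B) x.
rewrite hsize (prednK th0) -!catA.
by move=> <-; exact: pivot_cost_shift_left.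
Qed.

Lemma pivot_cost_le_query l j th : pairwise <=%R l -> probs l ->
  (j < size l)%N -> (0 < th)%N -> (th <= size l)%N ->
  pivot_cost l th <= query_cost l j th.
Proof.
move=> hsort hl hj th0 thle.
have e : l = take j l ++ nth 0 l j :: drop j.+1 l by rewrite -drop_nth ?cat_take_drop.
rewrite {1}e /query_cost /rem_nth; apply: pivot_cost_le_cat_cons; rewrite -?e //.
by move: thle; rewrite {1}e size_cat /=; lia.
Qed.

End PivotCost.

Lemma minlist_le_mem (R : realFieldType) (l : seq R) y : y \in l -> minlist l <= y.
Proof.
case: l => [//|x l] /=; elim: l x => [|z l IH] x /=; first by rewrite inE => /eqP ->.
rewrite !inE ge_min => /or3P [/eqP yx | /eqP -> | hy].
- by rewrite IH ?orbT // yx mem_head.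
- by rewrite lexx.
- by rewrite IH ?orbT // inE hy orbT.
Qed.

Lemma le_minlist (R : realFieldType) (l : seq R) v : l != [::] ->
  all (fun y => v <= y) l -> v <= minlist l.
Proof.
case: l => [//|x l] _ /= /andP [vx]; elim: l => [//|z l IH] /= /andP [vz vl].
by rewrite le_min vz IH.
Qed.

Lemma enum_setD1 (T : finType) (S : {set T}) i : enum (S :\ i) = rem i (enum S).
Proof.
rewrite rem_filter ?enum_uniq // /enum_mem -filter_predI; apply: eq_filter => x /=.
by rewrite in_setD1.
Qed.

Section ThresholdCost.
Variables (R : realFieldType) (n : nat) (p : 'I_n -> R).
Hypothesis p01 : forall i, 0 <= p i <= 1.
Hypothesis p_mono : forall i j : 'I_n, (i <= j)%N -> p i <= p j.
Implicit Types (S : {set 'I_n}) (i : 'I_n) (th : nat).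

Definition probs_of S := [seq p i | i <- enum S].

Lemma size_probs_of S : size (probs_of S) = #|S|.
Proof. by rewrite size_map -cardE. Qed.

Lemma probs_probs_of S : probs (probs_of S).
Proof. by apply/allP => x /mapP [i _ ->]. Qed.

Lemma sorted_probs_of S : pairwise <=%R (probs_of S).
Proof.
rewrite pairwise_map.
apply: (sub_pairwise (r := fun i j : 'I_n => (i <= j)%N)) => [i j /p_mono //|].
rewrite /enum_mem; apply: pairwise_filter.
have := iota_sorted 0 n; rewrite -val_enum_ord (sorted_pairwise leq_trans).
by rewrite pairwise_map enumT.
Qed.

Lemma probs_of_setD1 S i :
  probs_of (S :\ i) = rem_nth (index i (enum S)) (probs_of S).
Proof. by rewrite /probs_of enum_setD1 map_rem. Qed.

Lemma nth_probs_of S i : i \in S -> nth 0 (probs_of S) (index i (enum S)) = p i.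
Proof.
by move=> iS; rewrite (nth_map i) ?index_mem ?mem_enum // nth_index ?mem_enum.
Qed.

Lemma CE S th : C p S th = if (th == 0%N) || (#|S| < th)%N then 0
  else minlist [seq Cterm p S th i | i <- enum S].
Proof.
rewrite /C; case e: #|S| => [|f] /=; first by case: th.
rewrite e; case: ifP => // _; congr minlist; apply/eq_in_map => i.
rewrite mem_enum /Cterm /C => iS.
by have -> : #|S :\ i| = f by move: e; rewrite (cardsD1 i S) iS add1n => -[].
Qed.

Lemma Cterm_query S th i : i \in S ->
  (forall th', C p (S :\ i) th' = pivot_cost (probs_of (S :\ i)) th') ->
  Cterm p S th i = query_cost (probs_of S) (index i (enum S)) th.
Proof.
by move=> iS IH; rewrite /Cterm !IH /query_cost probs_of_setD1 nth_probs_of.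
Qed.

Lemma C_pivot_cost S th : C p S th = pivot_cost (probs_of S) th.
Proof.
have [N] := ubnP #|S|; elim: N S th => // N IH S th /ltnSE hN.
have [th_out|th_in] := boolP ((th == 0%N) || (#|S| < th)%N).
  by rewrite CE pivot_costE size_probs_of th_out.
rewrite CE (negbTE th_in); move: th_in; rewrite negb_or -leqNgt => /andP [th0 thle].
have IHS i : i \in S -> forall th', C p (S :\ i) th' = pivot_cost (probs_of (S :\ i)) th'.
  by move=> iS th'; apply: IH; move: hN; rewrite (cardsD1 i S) iS.
have [i0 i0S] : exists i0, i0 \in S.
  by apply/card_gt0P; rewrite (leq_trans _ thle) // lt0n.
have hj : (#|S| - th < size (enum S))%N by rewrite -cardE; lia.
set j := nth i0 (enum S) (#|S| - th).
have jS : j \in S by rewrite -mem_enum mem_nth.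
have hidx : index j (enum S) = (#|S| - th)%N by rewrite index_uniq ?enum_uniq.
apply/eqP; rewrite eq_le; apply/andP; split.
  rewrite pivot_costE size_probs_of ifN ?negb_or ?th0 -?leqNgt // -hidx.
  by rewrite -(Cterm_query _ jS (IHS _ jS)) minlist_le_mem // map_f ?mem_enum.
apply: le_minlist; first by case: (enum S) hj.
apply/allP => _ /mapP [i iS ->]; rewrite mem_enum in iS.
rewrite (Cterm_query _ iS (IHS _ iS)).
apply: pivot_cost_le_query; rewrite ?size_probs_of ?cardE ?index_mem ?mem_enum ?lt0n //.
- exact: sorted_probs_of.
- exact: probs_probs_of.
- by rewrite -cardE.
Qed.

End ThresholdCost.

Theorem theorem1 (R : realFieldType) (n : nat) (p : 'I_n -> R)
  (hn : (1 <= n)%N)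
  (hp01 : forall i, 0 <= p i <= 1)
  (hmono : forall i j : 'I_n, (i <= j)%N -> p i <= p j)
  (k : nat) (hk : (k < n)%N) :
  let i0 := Ordinal hk in
  C p [set: 'I_n] (n - k)%N = Cterm p [set: 'I_n] (n - k)%N i0 /\
  forall i : 'I_n, Cterm p [set: 'I_n] (n - k)%N i0 <= Cterm p [set: 'I_n] (n - k)%N i.
Proof.
move=> i0.
have size_all : size (probs_of p [set: 'I_n]) = n by rewrite size_probs_of cardsT card_ord.
have index_all (i : 'I_n) : index i (enum [set: 'I_n]) = i.
  by rewrite enum_setT -enumT index_enum_ord.
have Cterm_all (i : 'I_n) : Cterm p [set: 'I_n] (n - k) i
    = query_cost (probs_of p [set: 'I_n]) i (n - k).
  by rewrite -index_all Cterm_query ?in_setT // => th; exact: C_pivot_cost.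
have pivot_i0 : C p [set: 'I_n] (n - k) = Cterm p [set: 'I_n] (n - k) i0.
  rewrite C_pivot_cost // Cterm_all pivot_costE size_all ifN; last by apply/norP; split; lia.
  by rewrite (_ : n - (n - k) = k)%N; last lia.
split=> // i; rewrite -pivot_i0 C_pivot_cost // Cterm_all.
apply: pivot_cost_le_query; rewrite ?size_all ?ltn_ord ?subn_gt0 ?leq_subr //.
- exact: sorted_probs_of.
- exact: probs_probs_of.
Qed.
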